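(* Let $S$ and $T$ be primitive strings, each of length at least $2$, over a totally ordered alphabet. Let $U$ be the LMS-prefix of $S$ (i.e. of $\mathrm{conj}_1(S)$) and $V$ the LMS-prefix of $T$. If $U<_{LMS}V$, then $S\prec_\omega T$.
   Context: For $T=T[1..n]$, $\mathrm{conj}_i(T)=T[i..n]T[1..i-1]$; strings are viewed cyclically. For a primitive string $T$ of length $\ge2$, position $i$ is of type S if $\mathrm{conj}_i(T)<_{\mathrm{lex}}\mathrm{conj}_{i+1}(T)$ and of type L if $\mathrm{conj}_i(T)>_{\mathrm{lex}}\mathrm{conj}_{i+1}(T)$; an S-type position $i$ is LMS if $i-1$ (cyclically) is L-type. The LMS-prefix of $\mathrm{conj}_i(T)$ is the cyclic substring from position $i$ to the first LMS position strictly after $i$ (cyclically, wrapping around if needed). LMS-order: $U<_{LMS}V$ if $V$ is a proper prefix of $U$, or neither is a prefix of the other and $U<_{\mathrm{lex}}V$. The $\omega$-order: $S\prec_\omega T$ if either $\mathrm{root}(S)=\mathrm{root}(T)$ and $\exp(S)<\exp(T)$, or $S^\omega<_{\mathrm{lex}}T^\omega$, where $X^\omega$ is the infinite concatenation of copies of $X$ and $X=\mathrm{root}(X)^{\exp(X)}$ with $\mathrm{root}(X)$ primitive. *)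

(* Positions are 0-indexed internally: the paper's
   position i (1-indexed) is index i-1 here, and conj_i(T) = rot (i-1) T. *)
From mathcomp Require Import all_boot all_order.
Set Implicit Arguments. Unset Strict Implicit. Unset Printing Implicit Defensive.
Import Order.TTheory.
Local Open Scope order_scope.

Section Strings.
Variables (d : Order.disp_t) (A : orderType d).

Fixpoint lex_lt (u v : seq A) : bool :=
  match u, v with
  | [::], [::] => false
  | [::], _ :: _ => true
  | _ :: _, [::] => false
  | x :: u', y :: v' => (x < y) || ((x == y) && lex_lt u' v')
  end.

Definition spow (Y : seq A) (k : nat) : seq A := flatten (nseq k Y).

Definition primitive (X : seq A) : Prop :=
  X != [::] /\ forall (Y : seq A) (k : nat), X = spow Y k -> k = 1%N.

Definition sexp (X : seq A) : nat :=
  (\max_(k < (size X).+1 | (k %| size X) && (X == spow (take (size X %/ k) X) k)) k)%N.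
Definition sroot (X : seq A) : seq A := take (size X %/ sexp X) X.

Definition conj (i : nat) (T : seq A) : seq A := rot i T.

Definition typeS (T : seq A) (i : nat) : bool :=
  lex_lt (conj i T) (conj (i.+1 %% size T) T).
Definition typeL (T : seq A) (i : nat) : bool :=
  lex_lt (conj (i.+1 %% size T) T) (conj i T).
Definition isLMS (T : seq A) (i : nat) : bool :=
  typeS T i && typeL T ((i + size T).-1 %% size T).

Definition lms_dist (T : seq A) (i : nat) : nat :=
  (find (fun k => isLMS T ((i + k.+1) %% size T)) (iota 0 (size T))).+1.

(* LMS-prefix of conj_i(T): the cyclic substring T[i .. i + d] (d+1 letters,
   wrapping around if needed) *)
Definition lms_prefix (T : seq A) (i : nat) : seq A :=
  take (lms_dist T i).+1 (conj i T ++ conj i T).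

Definition lms_lt (U V : seq A) : bool :=
  (prefix V U && (V != U)) || (~~ prefix U V && ~~ prefix V U && lex_lt U V).

(* lexicographic order on the infinite words X^omega, Y^omega *)
Definition omega_at (X : seq A) (i : nat) : option A := onth X (i %% size X).
Definition omega_lt (X Y : seq A) : Prop :=
  exists k a b, (forall i, i < k -> omega_at X i = omega_at Y i)%N /\
    omega_at X k = Some a /\ omega_at Y k = Some b /\ a < b.

Definition omega_prec (S T : seq A) : Prop :=
  (sroot S = sroot T /\ (sexp S < sexp T)%N) \/ omega_lt S T.
End Strings.

(* Read S and T as the periodic infinite words S^omega and T^omega.  The type of
   a position is then decided by the first later letter that differs from the
   current one, so an L-type position followed by an S-type one is a strict
   descent.  If the LMS-prefixes U and V mismatch, S^omega < T^omega at the
   mismatch.  Otherwise V, which ends at the first LMS position e of T, is a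
   proper prefix of U, and S^omega agrees with T^omega up to e.  The descent of
   T from e-1 to e is copied by S, so e-1 is L-type in S; since e is not LMS in
   S, it is L-type in S while it is S-type in T.  After their common run of
   letters starting at e, S^omega therefore descends where T^omega ascends.
   An LMS position exists because an occurrence of the minimal letter preceded
   by a larger one is LMS. *)

From mathcomp Require Import all_boot all_order zify.
Set Implicit Arguments. Unset Strict Implicit. Unset Printing Implicit Defensive.
Import Order.TTheory.
Local Open Scope order_scope.

Section InfiniteWords.
Variables (d : Order.disp_t) (A : orderType d).
Implicit Types (f g : nat -> A) (r : rel A).

Definition first_diff r f g :=
  exists k, (forall j, (j < k)%N -> f j = g j) /\ r (f k) (g k).

Definition word_lt f g := first_diff <%O f g.

Definition next_diff r f i :=
  exists k, (forall j, (j <= k)%N -> f (i + j)%N = f i) /\ r (f i) (f (i + k.+1)%N).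

Definition stype f i := next_diff <%O f i.
Definition ltype f i := next_diff (fun x y => y < x) f i.

Lemma first_diff_flip r f g :
  first_diff r f g <-> first_diff (fun x y => r y x) g f.
Proof. by split=> -[k [eq_fg r_k]]; exists k; split=> // j /eq_fg. Qed.

Lemma first_diff_shift r f i :
  first_diff r (fun j => f (i + j)%N) (fun j => f (i.+1 + j)%N) <-> next_diff r f i.
Proof.
split=> -[k [eq_k r_k]]; exists k; last first.
  split=> [j lt_jk|]; first by rewrite addSnnS !eq_k // ltnW.
  by rewrite eq_k // addSnnS.
have const_k j : (j <= k)%N -> f (i + j)%N = f i.
  elim: j => [|j IHj] lt_jk; first by rewrite addn0.
  by rewrite addnS -addSn -eq_k // IHj // ltnW.
by split=> //; rewrite -(const_k k) // -addSnnS.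
Qed.

Lemma stype_ltype_excl f i : stype f i -> ltype f i -> False.
Proof.
move=> [a [eq_a lt_a]] [b [eq_b lt_b]].
case: (ltngtP a b) => [lt_ab|lt_ba|eq_ab].
- by move: lt_a; rewrite eq_b // ltxx.
- by move: lt_b; rewrite eq_a // ltxx.
- by move: lt_b; rewrite -eq_ab => /(lt_trans lt_a); rewrite ltxx.
Qed.

Lemma stype_or_ltype f i :
  (exists j, f (i + j)%N != f i) -> stype f i \/ ltype f i.
Proof.
move=> ex_j; case: (ex_minnP ex_j) => -[|k]; first by rewrite addn0 eqxx.
move=> neq_k min_k.
have const_k j : (j <= k)%N -> f (i + j)%N = f i.
  by move=> le_jk; apply/eqP/negPn/negP => /min_k; lia.
by move: neq_k; rewrite neq_lt => /orP[]; [right|left]; exists k.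
Qed.

Lemma ltype_of_lt f i : f i.+1 < f i -> ltype f i.
Proof.
by exists 0%N; split=> [j|]; rewrite ?leqn0 ?addn1 // => /eqP->; rewrite addn0.
Qed.

Lemma ltype_stypeS_lt f i : ltype f i -> stype f i.+1 -> f i.+1 < f i.
Proof.
move=> [[|k] [eq_k lt_k]] st_iS; first by rewrite addn1 in lt_k.
have eq_iS : f i.+1 = f i by rewrite -addn1 eq_k.
exfalso; apply: (stype_ltype_excl st_iS); exists k.
rewrite eq_iS; split=> [j le_jk|]; first by rewrite addSnnS eq_k.
by rewrite addSnnS.
Qed.

Lemma stype_of_min f i :
  (forall j, f i <= f j) -> (exists j, f (i + j)%N != f i) -> stype f i.
Proof.
move=> min_i /stype_or_ltype[//|[k [_ lt_k]]].
by move: (min_i (i + k.+1)%N); rewrite leNgt lt_k.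
Qed.

Lemma word_lt_ltype_stype f g e :
  (forall j, (j <= e)%N -> f j = g j) -> ltype f e -> stype g e -> word_lt f g.
Proof.
move=> eq_fg [a [eq_a lt_a]] [b [eq_b lt_b]].
have eq_e := eq_fg e (leqnn e).
have eq_upto m : (m <= minn a b)%N -> forall j, (j < e + m.+1)%N -> f j = g j.
  move=> le_m j lt_j; case: (leqP j e) => [|lt_ej]; first exact: eq_fg.
  by rewrite -(subnKC (ltnW lt_ej)) eq_a ?eq_b -?eq_e //; lia.
case: (ltngtP a b) => [lt_ab|lt_ba|eq_ab].
- exists (e + a.+1)%N; split; first by apply: eq_upto; lia.
  by rewrite (eq_b a.+1) // -eq_e.
- exists (e + b.+1)%N; split; first by apply: eq_upto; lia.
  by rewrite eq_a // eq_e.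
- exists (e + a.+1)%N; split; first by apply: eq_upto; lia.
  by rewrite (lt_trans lt_a) // eq_ab eq_e.
Qed.

Lemma ex_first_return f (a : A) q j :
  f q != a -> (q < j)%N -> f j = a -> exists i, [/\ (q < i)%N, f i = a & f i.-1 != a].
Proof.
move=> neq_q lt_qj eq_j.
have ex_i : exists i, (q < i)%N && (f i == a) by exists j; rewrite lt_qj eq_j eqxx.
case: (ex_minnP ex_i) => i /andP[lt_qi /eqP eq_i] min_i; exists i; split=> //.
case: (ltngtP q i.-1) => [lt_q_ip|lt_ip_q|<-//]; last by lia.
by apply/eqP=> eq_ip; move: (min_i i.-1); rewrite lt_q_ip eq_ip eqxx => /(_ isT); lia.
Qed.

End InfiniteWords.

Section Lex.
Variables (d : Order.disp_t) (A : orderType d).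
Implicit Types (u v : seq A).

Lemma lex_lt_irr u : lex_lt u u = false.
Proof. by elim: u => //= x u ->; rewrite ltxx eqxx. Qed.

Lemma lex_lt_mismatch (x0 : A) u v : lex_lt u v -> ~~ prefix u v ->
  exists k, [/\ (k < size u)%N, (k < size v)%N,
    forall j, (j < k)%N -> nth x0 u j = nth x0 v j & nth x0 u k < nth x0 v k].
Proof.
elim: u v => [|x u IHu] [|y v] //= /orP[lt_xy _|/andP[/eqP<- lt_uv]].
  by exists 0%N; split.
rewrite eqxx /= => /(IHu v lt_uv)[k [lt_ku lt_kv eq_k lt_k]].
by exists k.+1; split=> // -[|j] //= /eq_k.
Qed.

Lemma mismatch_lex_lt (x0 : A) u v k : (k < size u)%N -> (k < size v)%N ->
  (forall j, (j < k)%N -> nth x0 u j = nth x0 v j) -> nth x0 u k < nth x0 v k ->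
  lex_lt u v.
Proof.
elim: u v k => [|x u IHu] [|y v] [|k] //= lt_ku lt_kv eq_k lt_k; first by rewrite lt_k.
have /= -> := eq_k 0%N isT; rewrite eqxx (IHu v k) ?orbT // => j lt_jk.
exact: (eq_k j.+1).
Qed.

Lemma lms_lt_mkseq (f g : nat -> A) m n : lms_lt (mkseq f m) (mkseq g n) ->
  word_lt f g \/ (n < m)%N /\ (forall j, (j < n)%N -> f j = g j).
Proof.
case/orP=> [/andP[pre_gf neq_gf]|/andP[/andP[npre_fg _] lt_fg]].
  have le_nm : (n <= m)%N by rewrite -(size_mkseq f m) -(size_mkseq g n) size_prefix.
  right; move: pre_gf neq_gf; rewrite prefixE size_mkseq => /eqP take_f neq_gf.
  split=> [|j lt_jn].
    rewrite ltn_neqAle le_nm andbT; apply: contra neq_gf => /eqP eq_nm.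
    by rewrite -take_f eq_nm take_oversize ?size_mkseq.
  rewrite -(nth_mkseq (f 0) f (leq_trans lt_jn le_nm)) -(nth_take _ lt_jn).
  by rewrite take_f nth_mkseq.
left; have [k [lt_km lt_kn eq_k lt_k]] := lex_lt_mismatch (f 0) lt_fg npre_fg.
rewrite !size_mkseq in lt_km lt_kn.
exists k; split; last by rewrite -(nth_mkseq (f 0) f lt_km) -(nth_mkseq (f 0) g lt_kn).
move=> j lt_jk; rewrite -(nth_mkseq (f 0) f (ltn_trans lt_jk lt_km)).
by rewrite -(nth_mkseq (f 0) g (ltn_trans lt_jk lt_kn)) eq_k.
Qed.

End Lex.

Section Cyclic.
Variables (d : Order.disp_t) (A : orderType d) (x0 : A).
Implicit Types (X Y T : seq A).

Definition cyc T n := nth x0 T (n %% size T).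

Lemma cyc_mod T n : cyc T (n %% size T) = cyc T n.
Proof. by rewrite /cyc modn_mod. Qed.

Lemma cyc_addmul T n k : cyc T (n + k * size T) = cyc T n.
Proof. by rewrite /cyc addnC modnMDl. Qed.

Lemma nth_rot_cyc T i j : (j < size T)%N ->
  nth x0 (rot (i %% size T) T) j = cyc T (i + j).
Proof.
move=> lt_jn; set n := size T in lt_jn *; set r := i %% n.
have lt_rn : (r < n)%N by rewrite ltn_pmod //; lia.
rewrite /cyc -modnDml -/r /rot nth_cat size_drop -/n.
case: ltnP => [lt_j|le_j]; first by rewrite nth_drop modn_small //; lia.
rewrite nth_take; last by lia.
have -> : (r + j = j - (n - r) + n)%N by lia.
by rewrite modnDr modn_small //; lia.
Qed.

Lemma lex_lt_rot T a b : (0 < size T)%N ->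
  lex_lt (rot (a %% size T) T) (rot (b %% size T) T) <->
  word_lt (fun j => cyc T (a + j)) (fun j => cyc T (b + j)).
Proof.
move=> n_gt0; split=> [lt_ab|[k [eq_k lt_k]]].
  have npre : ~~ prefix (rot (a %% size T) T) (rot (b %% size T) T).
    rewrite prefixE !size_rot take_oversize ?size_rot //.
    by apply: contraTN lt_ab => /eqP->; rewrite lex_lt_irr.
  have [k [lt_k _ eq_k lt_ab_k]] := lex_lt_mismatch x0 lt_ab npre.
  rewrite size_rot in lt_k; rewrite !nth_rot_cyc // in lt_ab_k.
  by exists k; split=> // j lt_jk; rewrite -!nth_rot_cyc ?eq_k //; lia.
have lt_kn : (k < size T)%N.
  rewrite ltnNge; apply/negP => le_nk; move: lt_k.
  have per c : cyc T (c + k) = cyc T (c + (k - size T)).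
    by rewrite -(cyc_addmul T (c + (k - size T)) 1) mul1n -addnA subnK.
  by rewrite !per eq_k ?ltxx //; lia.
apply: (mismatch_lex_lt (x0 := x0) (k := k)); rewrite ?size_rot ?nth_rot_cyc //.
by move=> j lt_jk; rewrite !nth_rot_cyc ?eq_k //; lia.
Qed.

Lemma typeS_cyc T i : (0 < size T)%N -> typeS T (i %% size T) <-> stype (cyc T) i.
Proof.
move=> n_gt0; rewrite /typeS /conj -[(_ %% _).+1]addn1 modnDml addn1.
by rewrite lex_lt_rot //; apply: first_diff_shift.
Qed.

Lemma typeL_cyc T i : (0 < size T)%N -> typeL T (i %% size T) <-> ltype (cyc T) i.
Proof.
move=> n_gt0; rewrite /typeL /conj -[(_ %% _).+1]addn1 modnDml addn1.
by rewrite lex_lt_rot // /word_lt first_diff_flip; apply: first_diff_shift.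
Qed.

Lemma isLMS_cyc T i : (0 < size T)%N -> (0 < i)%N ->
  isLMS T (i %% size T) <-> stype (cyc T) i /\ ltype (cyc T) i.-1.
Proof.
move=> n_gt0 i_gt0; rewrite /isLMS; set n := size T.
have -> : ((i %% n + n).-1 %% n = i.-1 %% n)%N.
  have -> : ((i %% n + n).-1 = i %% n + n.-1)%N by lia.
  by rewrite modnDml (_ : i + n.-1 = i.-1 + n)%N ?modnDr //; lia.
rewrite -typeS_cyc // -typeL_cyc //.
by split=> [/andP[]|[-> ->]].
Qed.

Lemma primitive_neq_nseq T c : primitive T -> (2 <= size T)%N -> T != nseq (size T) c.
Proof.
move=> [_ prim_T] size_T; apply/eqP => eq_T.
suff /prim_T : T = spow [:: c] (size T) by lia.
by rewrite {1}eq_T; elim: (size T) => //= n ->.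
Qed.

Lemma cyc_nonconst T i : primitive T -> (2 <= size T)%N ->
  exists j, cyc T (i + j) != cyc T i.
Proof.
move=> prim_T size_T; set n := size T; have n_gt0 : (0 < n)%N by lia.
have [/existsP[j neq_j]|] := boolP [exists j : 'I_n, cyc T (i + j) != cyc T i].
  by exists j.
rewrite negb_exists => /forallP /= const_T.
have eq_j j : cyc T (i + j %% n) = cyc T i.
  by apply/eqP/negPn/(const_T (Ordinal (ltn_pmod j n_gt0))).
case/eqP: (primitive_neq_nseq (cyc T i) prim_T size_T).
apply: (@eq_from_nth _ x0) => [|p lt_pn]; first by rewrite size_nseq.
rewrite nth_nseq lt_pn -(eq_j (p + i.+1 * n - i)) /cyc modnDmr.
have -> : (i + (p + i.+1 * n - i) = i.+1 * n + p)%N by nia.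
by rewrite modnMDl modn_small.
Qed.

Lemma ex_isLMS T i : primitive T -> (2 <= size T)%N ->
  exists2 j, (i < j)%N & isLMS T (j %% size T).
Proof.
move=> prim_T size_T; set n := size T; have n_gt0 : (0 < n)%N by lia.
case: (@arg_minP _ _ 'I_n (Ordinal n_gt0) xpredT (fun p => cyc T p) isT) => p _ min_p.
have min_cyc x : cyc T p <= cyc T x.
  by rewrite -(cyc_mod T x); exact: (min_p (Ordinal (ltn_pmod x n_gt0)) isT).
have [j0] := cyc_nonconst (p + i * n) prim_T size_T; rewrite cyc_addmul.
set q := (p + i * n + j0)%N => neq_q.
have lt_q : (q < p + q.+1 * n)%N by nia.
have [j [lt_qj eq_j neq_jp]] := ex_first_return neq_q lt_q (cyc_addmul T p q.+1).
have j_gt0 : (0 < j)%N by lia.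
exists j; first by nia.
apply/isLMS_cyc => //; split.
  by apply: stype_of_min; [rewrite eq_j | apply: cyc_nonconst].
by apply: ltype_of_lt; rewrite prednK // eq_j lt_neqAle min_cyc andbT eq_sym.
Qed.

Lemma lms_dist_le T i : (lms_dist T i <= (size T).+1)%N.
Proof. by rewrite /lms_dist ltnS -[X in (_ <= X)%N](size_iota 0) find_size. Qed.

Lemma isLMS_lms_dist T i : primitive T -> (2 <= size T)%N ->
  isLMS T ((i + lms_dist T i) %% size T).
Proof.
move=> prim_T size_T; set n := size T; have n_gt0 : (0 < n)%N by lia.
set P := fun k => isLMS T ((i + k.+1) %% n).
have has_P : has P (iota 0 n).
  have [j lt_ij lms_j] := ex_isLMS i prim_T size_T.
  apply/hasP; exists ((j - i).-1 %% n); first by rewrite mem_iota ltn_pmod.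
  rewrite /P (_ : i + _ = (j - i).-1 %% n + i.+1)%N; last by lia.
  by rewrite modnDml (_ : (j - i).-1 + i.+1 = j)%N //; lia.
have := nth_find 0%N has_P; rewrite has_find size_iota in has_P.
by rewrite nth_iota.
Qed.

Lemma before_lms_dist T i j : (0 < j < lms_dist T i)%N -> ~~ isLMS T ((i + j) %% size T).
Proof.
rewrite /lms_dist; case: j => // j /andP[_ lt_j].
have le_find := find_size (fun k => isLMS T ((i + k.+1) %% size T)) (iota 0 (size T)).
rewrite size_iota in le_find.
by have := before_find 0%N lt_j; rewrite nth_iota ?add0n => [->|]; last lia.
Qed.

Lemma lms_prefix_mkseq T i : (2 <= size T)%N -> (i < size T)%N ->
  lms_prefix T i = mkseq (fun k => cyc T (i + k)) (lms_dist T i).+1.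
Proof.
move=> size_T lt_in; have le_dist := lms_dist_le T i.
have size_pre : size (lms_prefix T i) = (lms_dist T i).+1.
  by rewrite size_takel // size_cat /conj size_rot; lia.
apply: (@eq_from_nth _ x0) => [|k]; rewrite size_pre ?size_mkseq // => lt_k.
have rot_i : rot i T = rot (i %% size T) T by rewrite modn_small.
rewrite nth_take // nth_mkseq // /conj nth_cat size_rot rot_i.
case: ltnP => [lt_kn|le_nk]; first by rewrite nth_rot_cyc.
rewrite nth_rot_cyc; last by lia.
by rewrite -(cyc_addmul _ _ 1) mul1n -addnA subnK.
Qed.

Lemma omega_at_cyc T n : (0 < size T)%N -> omega_at T n = Some (cyc T n).
Proof. by move=> T_gt0; rewrite /omega_at onthE (nth_map x0) ?ltn_pmod. Qed.

Lemma omega_lt_cyc X Y : (0 < size X)%N -> (0 < size Y)%N ->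
  word_lt (cyc X) (cyc Y) -> omega_lt X Y.
Proof.
move=> X_gt0 Y_gt0 [k [eq_k lt_k]]; exists k, (cyc X k), (cyc Y k).
by rewrite !omega_at_cyc //; split=> // j /eq_k eq_j; rewrite !omega_at_cyc ?eq_j.
Qed.

Lemma word_lt_at_lms X Y e : primitive X -> (2 <= size X)%N -> (0 < size Y)%N ->
  (0 < e)%N -> ~~ isLMS X (e %% size X) -> isLMS Y (e %% size Y) ->
  (forall j, (j <= e)%N -> cyc X j = cyc Y j) -> word_lt (cyc X) (cyc Y).
Proof.
move=> prim_X size_X Y_gt0 e_gt0 nlms_X /(isLMS_cyc Y_gt0 e_gt0)[st_Y lt_Y] eq_XY.
have drop_Y : cyc Y e < cyc Y e.-1.
  by have := ltype_stypeS_lt lt_Y; rewrite prednK // => /(_ st_Y).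
have lt_X : ltype (cyc X) e.-1.
  by apply: ltype_of_lt; rewrite prednK // !eq_XY // leq_pred.
have nst_X : ~ stype (cyc X) e.
  by move=> st_X; case/negP: nlms_X; apply/isLMS_cyc => //; lia.
have [//|lt_Xe] := stype_or_ltype (cyc_nonconst e prim_X size_X).
exact: word_lt_ltype_stype eq_XY lt_Xe st_Y.
Qed.
End Cyclic.

Theorem lemma5 (d : Order.disp_t) (A : orderType d) (S T : seq A) :
  primitive S -> primitive T -> (2 <= size S)%N -> (2 <= size T)%N ->
  lms_lt (lms_prefix S 0) (lms_prefix T 0) ->
  omega_prec S T.
Proof.
move=> prim_S prim_T size_S size_T.
have [x0 _] : exists x : A, x \in S.
  by case: S size_S {prim_S} => // x; exists x; rewrite mem_head.
rewrite !(lms_prefix_mkseq x0) //; try lia.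
move=> /lms_lt_mkseq lt_UV; right; apply: (omega_lt_cyc (x0 := x0)); try lia.
case: lt_UV => [//|[lt_dist eq_ST]].
apply: (word_lt_at_lms (e := lms_dist T 0)) => //; try lia.
  by rewrite -[lms_dist T 0]add0n before_lms_dist.
by rewrite -[lms_dist T 0]add0n isLMS_lms_dist.
Qed.
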